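(* For each $t\ge0$ there exists $\pi^*\in\mathcal{FG}$ such that $V_{\pi^*}(t)=\sup_{\pi\in\mathcal{FG}}V_\pi(t)$.
   Context: $n\ge2$; $\Delta_n$, $\overline{\Delta}_n$ open and closed unit simplices. The market is a sequence $\{\mu(t)\}_{t\ge0}\subset\Delta_n$ with $\frac1M\le\mu_i(t+1)/\mu_i(t)\le M$ for a constant $M>0$. Relative value: $V_\pi(0)=1$, $V_\pi(t+1)=V_\pi(t)\sum_i\pi_i(\mu(t))\mu_i(t+1)/\mu_i(t)$. $\mathcal{FG}$ is the set of maps $\pi:\Delta_n\to\overline{\Delta}_n$ for which there is a concave $\Phi:\Delta_n\to(0,\infty)$ with $\sum_i\pi_i(p)\frac{q_i}{p_i}\ge\frac{\Phi(q)}{\Phi(p)}$ for all $p,q\in\Delta_n$. *)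

From mathcomp Require Import all_boot all_order all_algebra.
From mathcomp Require Import reals.
Set Implicit Arguments. Unset Strict Implicit. Unset Printing Implicit Defensive.
Import Order.TTheory GRing.Theory Num.Theory.
Local Open Scope ring_scope.

Section Defs.
Variables (R : realType) (n : nat).

Definition in_open_simplex (p : 'I_n -> R) : Prop :=
  (forall i, 0 < p i) /\ \sum_(i < n) p i = 1.

Definition in_closed_simplex (p : 'I_n -> R) : Prop :=
  (forall i, 0 <= p i) /\ \sum_(i < n) p i = 1.

Definition positive_concave_on_simplex (Phi : ('I_n -> R) -> R) : Prop :=
  (forall p, in_open_simplex p -> 0 < Phi p) /\
  (forall p q (l : R), in_open_simplex p -> in_open_simplex q ->
     0 <= l <= 1 ->
     l * Phi p + (1 - l) * Phi q <= Phi (fun i => l * p i + (1 - l) * q i)).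

Definition FG (pi : ('I_n -> R) -> ('I_n -> R)) : Prop :=
  (forall p, in_open_simplex p -> in_closed_simplex (pi p)) /\
  exists Phi : ('I_n -> R) -> R,
    positive_concave_on_simplex Phi /\
    forall p q, in_open_simplex p -> in_open_simplex q ->
      Phi q / Phi p <= \sum_(i < n) pi p i * (q i / p i).

Fixpoint relval (pi : ('I_n -> R) -> ('I_n -> R)) (mu : nat -> 'I_n -> R)
    (t : nat) : R :=
  match t with
  | 0 => 1
  | t'.+1 => relval pi mu t' *
             \sum_(i < n) pi (mu t') i * (mu t'.+1 i / mu t' i)
  end.

End Defs.

(* V_pi(t) only depends on the weights pi(mu 0), ..., pi(mu t).  Record a
   portfolio in FG with generating function Phi by these weights together with
   the normalised values Phi(mu k) / Phi(mu 0): they satisfy the finitely many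
   closed supporting inequalities
     Phi(mu l) <= Phi(mu k) * sum_i pi_i(mu k) * mu_l i / mu_k i
   and lie in a bounded box.  Conversely, any such data is realised by the
   portfolio generated by the minimum of the linear majorants
   q |-> Phi(mu k) * sum_i pi_i(mu k) * q_i / mu_k i, which is concave and
   positive.  V(t) is continuous in the data, so it attains its maximum on the
   compact set of admissible data. *)

From mathcomp Require Import all_boot all_order all_algebra.
From mathcomp Require Import reals ring.
From mathcomp Require Import boolp classical_sets topology normedtype derive.
Set Implicit Arguments. Unset Strict Implicit. Unset Printing Implicit Defensive.
Import Order.TTheory GRing.Theory Num.Theory.
Import numFieldNormedType.Exports.
Local Open Scope ring_scope.

Section Simplex.
Variables (R : realType) (n : nat).
Implicit Types p q w : 'I_n -> R.

Lemma open_closed_simplex p : in_open_simplex p -> in_closed_simplex p.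
Proof. by case=> p0 p1; split=> // i; exact: ltW. Qed.

Lemma closed_simplex_le1 p : in_closed_simplex p -> forall i, p i <= 1.
Proof.
by case=> p0 p1 i; rewrite -p1 (bigD1 i) //= lerDl sumr_ge0.
Qed.

Lemma closed_simplex_wsum_gt0 w q : in_closed_simplex w ->
  (forall i, 0 < q i) -> 0 < \sum_i w i * q i.
Proof.
case=> w0 w1 q0; rewrite lt_def sumr_ge0 ?andbT; last first.
  by move=> i _; rewrite mulr_ge0 // ltW.
apply: contra_eqN w1 => /eqP/psumr_eq0P wq0; rewrite eq_sym big1 ?oner_eq0 // => i _.
have /eqP := wq0 (fun j _ => mulr_ge0 (w0 j) (ltW (q0 j))) i isT.
by rewrite mulf_eq0 (gt_eqF (q0 i)) orbF => /eqP.
Qed.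

Lemma closed_simplex_ratio_le w p q : in_closed_simplex w ->
  in_open_simplex p -> in_closed_simplex q ->
  \sum_i w i * (q i / p i) <= \sum_i (p i)^-1.
Proof.
move=> [w0 w1] [p0 _] hq; apply: ler_sum => i _.
have qp_le : q i / p i <= (p i)^-1.
  by rewrite ler_pdivrMr // mulVf ?gt_eqF // (closed_simplex_le1 hq).
apply: le_trans qp_le; rewrite ler_piMl ?(closed_simplex_le1 (conj w0 w1)) //.
by rewrite divr_ge0 //; [case: hq | exact: ltW].
Qed.

End Simplex.

Lemma relval_ext (R : realType) (n : nat) (pi pi' : ('I_n -> R) -> 'I_n -> R)
    (mu : nat -> 'I_n -> R) (t : nat) :
  (forall s, (s < t)%N -> pi (mu s) = pi' (mu s)) ->
  relval pi mu t = relval pi' mu t.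
Proof.
elim: t => [//|t IH] eq_pi /=.
by rewrite IH ?eq_pi // => s /ltnW; exact: eq_pi.
Qed.

Lemma FG_market (R : realType) (n : nat) : FG (fun p : 'I_n -> R => p).
Proof.
split=> [p|]; first exact: open_closed_simplex.
exists (fun=> 1); split.
  by split=> // p q l _ _ _; rewrite !mulr1 subrKC.
move=> p q [p0 _] [_ q1]; rewrite divr1 -q1 le_eqVlt; apply/orP; left.
by apply/eqP/eq_bigr => i _; rewrite mulrC divfK ?gt_eqF.
Qed.

Section PortfolioData.
Variables (R : realType) (n : nat) (K : finType) (k0 : K).
Variable y : K -> 'I_n -> R.
Hypothesis y_simplex : forall k, in_open_simplex (y k).

Definition level (x : K * option 'I_n -> R) k := x (k, None).
Definition weight (x : K * option 'I_n -> R) k i := x (k, Some i).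

Definition feasible x :=
  (forall k, in_closed_simplex (weight x k)) /\
  (forall k l, level x l <= level x k * \sum_i weight x k i * (y l i / y k i)).

Definition bound : R := 1 + \sum_k \sum_i (y k i)^-1.

Definition admissible x :=
  feasible x /\ forall k, bound^-1 <= level x k /\ level x k <= bound.

Definition rep (p : 'I_n -> R) : K := xget k0 [set k | y k = p].

Lemma y_rep k : y (rep (y k)) = y k.
Proof. exact: (@xgetI _ k0 [set l | y l = y k] k erefl). Qed.

Lemma y_gt0 k i : 0 < y k i.
Proof. by case: (y_simplex k). Qed.

Lemma inv_y_ge0 k i : 0 <= (y k i)^-1.
Proof. by rewrite invr_ge0 ltW ?y_gt0. Qed.

Lemma sum_inv_y_le_bound k : \sum_i (y k i)^-1 <= bound.
Proof.
rewrite /bound (bigD1 k) //= addrCA lerDl addr_ge0 //.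
by rewrite sumr_ge0 // => l _; rewrite sumr_ge0 // => i _; exact: inv_y_ge0.
Qed.

Lemma bound_ge1 : 1 <= bound.
Proof.
rewrite lerDl sumr_ge0 // => k _; rewrite sumr_ge0 // => i _; exact: inv_y_ge0.
Qed.

Lemma FG_admissible pi : FG pi ->
  exists2 x, admissible x & forall k, weight x k = pi (y k).
Proof.
move=> [pi_simplex [Phi [[Phi_gt0 _] Phi_le]]].
pose x j := if j.2 is Some i then pi (y j.1) i else Phi (y j.1) / Phi (y k0).
have ratio_le k l : Phi (y l) / Phi (y k) <= bound.
  apply: le_trans (Phi_le _ _ (y_simplex k) (y_simplex l)) _.
  apply: le_trans (sum_inv_y_le_bound k).
  apply: closed_simplex_ratio_le (pi_simplex _ (y_simplex k)) (y_simplex k) _.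
  exact: open_closed_simplex.
exists x => //; split; [split=> [k|k l] | split].
- exact: (pi_simplex _ (y_simplex k)).
- rewrite /level /weight /= mulrAC ler_pM2r ?invr_gt0 ?Phi_gt0 //.
  by rewrite -ler_pdivrMl ?Phi_gt0 // mulrC; exact: Phi_le.
- rewrite /level /x /= -invf_div lef_pV2 ?posrE ?divr_gt0 ?Phi_gt0 //.
  exact: lt_le_trans ltr01 bound_ge1.
- exact: ratio_le.
Qed.

Section Envelope.
Variable x : K * option 'I_n -> R.
Hypotheses (x_feasible : feasible x) (level_gt0 : forall k, 0 < level x k).

Definition ratio_sum k (q : 'I_n -> R) := \sum_i weight x k i * (q i / y k i).
Definition majorant k q := level x k * ratio_sum k q.
Definition argmin q := Order.arg_min k0 xpredT (majorant^~ q).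
Definition envelope q := majorant (argmin q) q.
(* At a market point the envelope is attained at the index [rep p]; choosing it
   there (rather than an arbitrary minimiser) makes [portfolio_of] return the
   recorded weights. *)
Definition select p := if `[< y (rep p) = p >] then rep p else argmin p.
Definition portfolio_of p i :=
  weight x (select p) i * (p i / y (select p) i) / ratio_sum (select p) p.

Lemma weight_simplex k : in_closed_simplex (weight x k).
Proof. by case: x_feasible. Qed.

Lemma ratio_sum_gt0 k q : in_open_simplex q -> 0 < ratio_sum k q.
Proof.
case=> q0 _; apply: closed_simplex_wsum_gt0 (weight_simplex k) _ => i.
by rewrite divr_gt0 ?y_gt0.
Qed.

Lemma ratio_sum_at k : ratio_sum k (y k) = 1.
Proof.
rewrite /ratio_sum -(proj2 (weight_simplex k)); apply: eq_bigr => i _.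
by rewrite divff ?mulr1 // gt_eqF ?y_gt0.
Qed.

Lemma envelope_le k q : envelope q <= majorant k q.
Proof. by rewrite /envelope /argmin; case: arg_minP => // l _; apply. Qed.

Lemma envelope_at k : envelope (y k) = level x k.
Proof.
apply/eqP; rewrite eq_le; apply/andP; split.
  by apply: le_trans (envelope_le k _) _; rewrite /majorant ratio_sum_at mulr1.
by case: x_feasible => _; apply.
Qed.

Lemma majorant_select p : majorant (select p) p = envelope p.
Proof.
rewrite /select; case: asboolP => // e.
by rewrite -{2 3}e /majorant ratio_sum_at mulr1 envelope_at.
Qed.

Lemma majorant_mix k p q (l : R) :
  majorant k (fun i => l * p i + (1 - l) * q i) =
  l * majorant k p + (1 - l) * majorant k q.
Proof.
rewrite /majorant /ratio_sum mulrCA [_ * (level x k * _)]mulrCA -mulrDr.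
congr (_ * _); rewrite !mulr_sumr -big_split; apply: eq_bigr => i _ /=.
ring.
Qed.

Lemma envelope_concave : positive_concave_on_simplex envelope.
Proof.
split=> [p hp|p q l _ _ /andP[l0 l1]].
  by rewrite mulr_gt0 ?level_gt0 ?ratio_sum_gt0.
rewrite /envelope majorant_mix lerD // ler_wpM2l ?subr_ge0 //; exact: envelope_le.
Qed.

Lemma portfolio_of_ratio p q : in_open_simplex p ->
  \sum_i portfolio_of p i * (q i / p i) =
  ratio_sum (select p) q / ratio_sum (select p) p.
Proof.
move=> hp; rewrite /portfolio_of; set k := select p.
have rs0 : ratio_sum k p != 0 by rewrite gt_eqF ?ratio_sum_gt0.
rewrite [ratio_sum k q]/ratio_sum mulr_suml; apply: eq_bigr => i _.
have p0 : p i != 0 by case: hp => p0 _; rewrite gt_eqF.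
have y0 : y k i != 0 by rewrite gt_eqF ?y_gt0.
by field; rewrite p0 y0 rs0.
Qed.

Lemma FG_portfolio_of : FG portfolio_of.
Proof.
split=> [p hp|].
  have [w0 _] := weight_simplex (select p); have [p0 _] := hp.
  have rs0 := ratio_sum_gt0 (select p) hp; split=> [i|].
    by rewrite /portfolio_of divr_ge0 ?(ltW rs0) // mulr_ge0 // divr_ge0 // ltW ?y_gt0.
  by rewrite /portfolio_of -mulr_suml -/(ratio_sum _ _) divff ?gt_eqF.
exists envelope; split=> [|p q hp hq]; first exact: envelope_concave.
rewrite portfolio_of_ratio //; set k := select p.
have -> : ratio_sum k q / ratio_sum k p = majorant k q / majorant k p.
  by rewrite /majorant -mulf_div divff ?mul1r // gt_eqF ?level_gt0.
rewrite majorant_select ler_wpM2r ?envelope_le // invr_ge0 ltW //.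
by case: envelope_concave => env_gt0 _; exact: env_gt0.
Qed.

Lemma portfolio_of_at k : portfolio_of (y k) = weight x (rep (y k)).
Proof.
apply/funext => i; rewrite /portfolio_of.
have -> : select (y k) = rep (y k) by rewrite /select asboolT // y_rep.
set l := rep (y k); rewrite -(y_rep k) -/l.
by rewrite ratio_sum_at divr1 divff ?mulr1 // gt_eqF ?y_gt0.
Qed.

End Envelope.
End PortfolioData.

Local Open Scope classical_set_scope.

Section Continuity.
Variables (R : realType) (T : topologicalType).

Lemma continuous_sum (I : Type) (r : seq I) (F : I -> T -> R) :
  (forall i, continuous (F i)) -> continuous (fun x => \sum_(i <- r) F i x).
Proof. by move=> F_cont; apply: continuous_big => //; exact: add_continuous. Qed.

Lemma continuous_mul (f g : T -> R) : continuous f -> continuous g ->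
  continuous (fun x => f x * g x).
Proof. by move=> f_cont g_cont x; exact: continuousM (f_cont x) (g_cont x). Qed.

Lemma closed_le_continuous (f g : T -> R) : continuous f -> continuous g ->
  closed [set x | f x <= g x].
Proof.
move=> f_cont g_cont.
have -> : [set x | f x <= g x] = (fun x => g x - f x) @^-1` [set r | 0 <= r].
  by apply/seteqP; split=> x /=; rewrite subr_ge0.
apply: preimage_closed; last exact: closed_ge.
by move=> x _; exact: (continuousB (g_cont x) (f_cont x)).
Qed.

Lemma closed_eq_continuous (f : T -> R) (c : R) : continuous f ->
  closed [set x | f x = c].
Proof.
move=> f_cont; apply: (@preimage_closed _ _ f [set r | r = c]); last exact: closed_eq.
by move=> x _; exact: f_cont.
Qed.

Lemma closed_forall (I : Type) (A : I -> set T) :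
  (forall i, closed (A i)) -> closed [set x | forall i, A i x].
Proof.
move=> A_closed; rewrite (_ : [set x | _] = \bigcap_i A i).
  by apply: closed_bigI => i _; exact: A_closed.
by apply/seteqP; split=> x /= Ax i //; exact: Ax.
Qed.

Lemma relval_continuous (n : nat) (pi : T -> ('I_n -> R) -> 'I_n -> R)
    (mu : nat -> 'I_n -> R) (t : nat) :
  (forall p i, continuous (fun x => pi x p i)) ->
  continuous (fun x => relval (pi x) mu t).
Proof.
move=> pi_cont; elim: t => [|t IH] /=; first exact: cst_continuous.
apply: continuous_mul IH _; apply: continuous_sum => i.
by apply: continuous_mul; [exact: pi_cont | exact: cst_continuous].
Qed.

End Continuity.

Section Compactness.
Variables (R : realType) (n : nat) (K : finType) (y : K -> 'I_n -> R).
Hypothesis y_simplex : forall k, in_open_simplex (y k).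
Let J := (K * option 'I_n)%type.

Lemma ptws_coord_continuous (j : J) : continuous (fun x : {ptws J -> R} => x j).
Proof. exact: (@proj_continuous J (fun=> R) j). Qed.

Lemma closed_admissible : closed [set x : {ptws J -> R} | admissible y x].
Proof.
rewrite /admissible /feasible /in_closed_simplex.
apply: closedI; [apply: closedI|]; apply: closed_forall => k.
- apply: closedI; first apply: closed_forall => i.
    exact (closed_le_continuous (@cst_continuous _ R 0)
      (ptws_coord_continuous (j := (k, Some i)))).
  apply: closed_eq_continuous; apply: continuous_sum => i.
  exact: (ptws_coord_continuous (j := (k, Some i))).
- apply: closed_forall => l; apply: closed_le_continuous; first exact: ptws_coord_continuous.
  apply: continuous_mul; first exact: ptws_coord_continuous.
  apply: continuous_sum => i.
  apply: continuous_mul; [exact: ptws_coord_continuous | exact: cst_continuous].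
- have level_cont := ptws_coord_continuous (j := (k, None)).
  apply: closedI.
    exact (closed_le_continuous (@cst_continuous _ R _) level_cont).
  exact (closed_le_continuous level_cont (@cst_continuous _ R _)).
Qed.

Lemma compact_admissible : compact [set x : {ptws J -> R} | admissible y x].
Proof.
apply: subclosed_compact closed_admissible _ _.
  exact: (@tychonoff J (fun=> R) (fun=> `[0, bound y])
    (fun=> @segment_compact R 0 (bound y))).
move=> x [[x_simplex _] level_bound] [k [i|]] /=; rewrite in_itv /=; apply/andP.
  have [x0 _] := x_simplex k; split; first exact: x0.
  exact: le_trans (closed_simplex_le1 (x_simplex k) i) (bound_ge1 y_simplex).
have [lo hi] := level_bound k; split=> //.
by apply: le_trans lo; rewrite invr_ge0 (le_trans ler01) ?(bound_ge1 y_simplex).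
Qed.

End Compactness.

Local Open Scope ring_scope.

Theorem lemma4p5 (R : realType) (n : nat) (hn : (2 <= n)%N)
  (mu : nat -> 'I_n -> R) (hmu : forall t, in_open_simplex (mu t))
  (M : R) (hM : 0 < M)
  (hratio : forall (t : nat) (i : 'I_n),
     M^-1 <= mu t.+1 i / mu t i /\ mu t.+1 i / mu t i <= M)
  (t : nat) :
  exists2 pistar : ('I_n -> R) -> ('I_n -> R),
    FG pistar &
    forall pi, FG pi -> relval pi mu t <= relval pistar mu t.
Proof.
pose y (k : 'I_t.+1) := mu k.
have y_simplex k : in_open_simplex (y k) by exact: hmu.
pose value (x : {ptws ('I_t.+1 * option 'I_n)%type -> R}) :=
  relval (fun p => weight x (rep ord0 y p)) mu t.
have relval_value pi x : (forall k, pi (y k) = weight x (rep ord0 y (y k))) ->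
    relval pi mu t = value x.
  move=> pi_y; apply: relval_ext => s s_lt.
  exact (pi_y (@Ordinal t.+1 s (ltnW s_lt))).
have [x0 x0_adm _] := FG_admissible ord0 y_simplex (FG_market R n).
have value_cont : continuous value.
  apply: relval_continuous => p i.
  exact (ptws_coord_continuous (j := (rep ord0 y p, Some i))).
have [|xs] := compact_EVT_max _ (compact_admissible y_simplex)
  (continuous_subspaceT value_cont); first by exists x0.
rewrite inE => -[xs_feasible xs_level] xs_max.
exists (portfolio_of ord0 y xs).
  apply: (FG_portfolio_of ord0 y_simplex xs_feasible) => k.
  apply: lt_le_trans (proj1 (xs_level k)).
  by rewrite invr_gt0 (lt_le_trans ltr01) ?bound_ge1.
move=> pi pi_FG; have [x x_adm x_pi] := FG_admissible ord0 y_simplex pi_FG.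
rewrite (relval_value pi x) => [|k]; last by rewrite x_pi y_rep.
rewrite (relval_value _ xs) => [|k]; last exact: portfolio_of_at.
by apply: xs_max; rewrite inE.
Qed.
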